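(* Let $\delta>0$, let $X$ be a geodesic $\delta$--hyperbolic space, and let the group $G$ act $(\kappa_0,N_0)$--acylindrically on $X$ with $\kappa_0\geqslant\delta$; put $\rho_0:=\delta/N_0$ and $c:=\frac{1}{10^6}\cdot\frac{\rho_0}{\kappa_0}$. Let $U\subset G$ be finite, let $x_0\in X$ be a point with $\frac1{|U|}\sum_{u\in U}|ux_0-x_0|\leqslant E(U)+\delta$, and let $U_1:=\{u\in U\mid |ux_0-x_0|\leqslant\kappa_0\}$. Then for all $v\in G$ with $|vx_0-x_0|\geqslant10^4\kappa_0$, $$|U_1vU_1|\geqslant c^2|U_1|^2.$$
   Context: Distance $|x-y|$; Gromov product $(p,q)_x=\frac12(|p-x|+|q-x|-|p-q|)$; $X$ is $\delta$--hyperbolic if $(p,r)_x\geqslant\min\{(p,q)_x,(q,r)_x\}-\delta$ for all $p,q,r,x$. The action is $(\kappa_0,N_0)$--acylindrical ($N_0\geqslant1$) if for all $x,y$ with $|x-y|\geqslant\kappa_0$ at most $N_0$ elements $g\in G$ satisfy $|gx-x|\leqslant100\delta$ and $|gy-y|\leqslant100\delta$. $E(U):=\inf_{x\in X}\frac1{|U|}\sum_{u\in U}|ux-x|$. $U_1vU_1:=\{uvw\mid u,w\in U_1\}$. *)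

From HB Require Import structures.
From mathcomp Require Import all_boot all_order all_algebra.
From mathcomp Require Import finmap.
From mathcomp Require Import classical_sets reals.
Set Implicit Arguments. Unset Strict Implicit. Unset Printing Implicit Defensive.
Import Order.TTheory GRing.Theory Num.Theory.
Local Open Scope fset_scope.
Local Open Scope ring_scope.

Section Defs.
Variable R : realType.

Definition is_metric (X : Type) (d : X -> X -> R) : Prop :=
  [/\ forall x y, 0 <= d x y,
      forall x y, d x y = 0 <-> x = y,
      forall x y, d x y = d y x &
      forall x y z, d x z <= d x y + d y z].

Definition geodesic_space (X : Type) (d : X -> X -> R) : Prop :=
  forall x y : X, exists gam : R -> X,
    [/\ gam 0 = x, gam (d x y) = y &
        forall s t, 0 <= s <= d x y -> 0 <= t <= d x y ->
          d (gam s) (gam t) = `|s - t|].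

Definition gromov (X : Type) (d : X -> X -> R) (p q x : X) : R :=
  (d p x + d q x - d p q) / 2.

Definition hyperbolic (X : Type) (d : X -> X -> R) (delta : R) : Prop :=
  forall p q r x : X,
    Num.min (gromov d p q x) (gromov d q r x) - delta <= gromov d p r x.

Definition isometric_action (G : groupType) (X : Type) (d : X -> X -> R)
  (act : G -> X -> X) : Prop :=
  [/\ forall x, act 1%g x = x,
      forall g h x, act (g * h)%g x = act g (act h x) &
      forall g x y, d (act g x) (act g y) = d x y].

Definition acylindrical (G : groupType) (X : Type) (d : X -> X -> R)
  (act : G -> X -> X) (delta kappa0 : R) (N0 : nat) : Prop :=
  forall x y : X, kappa0 <= d x y ->
    forall S : {fset G},
      (forall g, g \in S ->
         d (act g x) x <= 100 * delta /\ d (act g y) y <= 100 * delta) ->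
      (#|` S| <= N0)%N.

Definition avg_disp (G : groupType) (X : Type) (d : X -> X -> R)
  (act : G -> X -> X) (U : {fset G}) (x : X) : R :=
  (\sum_(u <- U) d (act u x) x) / #|` U|%:R.

Definition energy (G : groupType) (X : Type) (d : X -> X -> R)
  (act : G -> X -> X) (U : {fset G}) : R :=
  inf (range (avg_disp d act U)).

Definition double_coset_prod (G : groupType) (U1 : {fset G}) (v : G) : {fset G} :=
  [fset (u * v * w)%g | u in U1, w in U1].

End Defs.

From HB Require Import structures.
From mathcomp Require Import all_boot all_order all_algebra.
From mathcomp Require Import finmap.
From mathcomp Require Import classical_sets reals.
From mathcomp Require Import ring lra.

Set Implicit Arguments.
Unset Strict Implicit.
Unset Printing Implicit Defensive.

Import Order.TTheory GRing.Theory Num.Theory.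
Local Open Scope fset_scope.
Local Open Scope ring_scope.

(* Count the products u v w through their fibres: |U1|^2 <= |U1 v U1| K, where K bounds,
   for each g, the number of u in U1 with v^-1 u^-1 g in U1.  Translating such a fibre by
   u0^-1 gives elements moving both x0 and v x0 by at most 2 kappa0.  On a geodesic from
   x0 to v x0 pick p and q, a distance kappa0 apart and far from both ends.  Such an
   element h keeps h p, h q near the geodesic (Gromov products at most 2 delta), and
   d(x0, h p), d(x0, h q) lie in windows of length 4 kappa0; cutting the windows into
   pieces of length delta sorts the elements into M^2 classes, M = floor(4 kappa0/delta) + 1,
   and two elements of one class move p and q by at most 7 delta relative to each other,
   so acylindricity bounds each class by N0.  Finally c^2 M^2 N0 <= 1. *)

Section FsetCounting.
Variable T : choiceType.

Lemma sum_card_fset_sep_exchange (T' : choiceType) (A : {fset T}) (B : {fset T'})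
    (r : T -> T' -> bool) :
  (\sum_(x <- A) #|` [fset y in B | r x y]| =
   \sum_(y <- B) #|` [fset x in A | r x y]|)%N.
Proof.
under eq_bigr do rewrite card_fset_sum1 -big_fset_condE big_mkcond.
rewrite exchange_big; apply: eq_bigr => y _.
by rewrite card_fset_sum1 -big_fset_condE [RHS]big_mkcond.
Qed.

Lemma card_fset_le_fibers (S : {fset T}) (f : T -> nat) (n N : nat) :
  (forall x, x \in S -> f x < n)%N ->
  (forall i, #|` [fset x in S | f x == i]| <= N)%N ->
  (#|` S| <= n * N)%N.
Proof.
move=> f_lt fiber_le; set B := [fset i in iota 0 n].
have card_B : #|` B| = n by rewrite card_fseq undup_id ?iota_uniq ?size_iota.
have one_slot x : x \in S -> #|` [fset i in B | f x == i]| = 1%N.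
  move=> Sx; rewrite -(cardfs1 (f x)); congr #|` _|; apply/fsetP => i.
  by rewrite !inE mem_iota add0n eq_sym; case: eqP => [->|]; rewrite ?andbF ?f_lt.
rewrite card_fset_sum1 big_seq -(eq_bigr _ one_slot) -big_seq.
rewrite sum_card_fset_sep_exchange -card_B card_fset_sum1 big_distrl /=.
by apply: leq_sum => i _; rewrite mul1n.
Qed.
End FsetCounting.

Lemma card_double_coset_prod_ge (G : groupType) (U1 : {fset G}) (v : G) (K : nat) :
  (forall g, #|` [fset u in U1 | (v^-1 * u^-1 * g)%g \in U1]| <= K)%N ->
  (#|` U1| * #|` U1| <= #|` double_coset_prod U1 v| * K)%N.
Proof.
move=> fiber_le; set D := double_coset_prod U1 v.
have row u : u \in U1 ->
    #|` U1| = #|` [fset g in D | (v^-1 * u^-1 * g)%g \in U1]|.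
  move=> U1u; have -> : [fset g in D | (v^-1 * u^-1 * g)%g \in U1] =
                        [fset (u * v * w)%g | w in U1].
    apply/fsetP => g; rewrite !inE.
    apply/andP/imfsetP => [[_ U1g]|[w U1w ->]].
      by exists (v^-1 * u^-1 * g)%g; rewrite // -!mulgA !mulVKg.
    split; last by rewrite -!mulgA !mulKg.
    by apply/imfset2P; exists u => //; exists w.
  by rewrite [in RHS]card_in_imfset //= => w1 w2 _ _; apply: mulgI.
rewrite {1}card_fset_sum1 big_distrl /= big_seq.
under eq_bigr => u /row -> do rewrite mul1n.
rewrite -big_seq sum_card_fset_sep_exchange card_fset_sum1 big_distrl /=.
by apply: leq_sum => g _; rewrite mul1n.
Qed.

Section HyperbolicGeometry.
Variables (R : realType) (X : Type) (d : X -> X -> R) (delta : R).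
Hypotheses (d_metric : is_metric d) (d_hyp : hyperbolic d delta).

(* As (a, b)_z = 0 and (a, x)_z > delta, hyperbolicity gives (x, b)_z <= delta; as
   (y, b)_z > 2 delta, it then forces (x, y)_z <= 2 delta. *)
Lemma gromov_le_near_segment (k : R) (x y a b z : X) :
  d a z + d z b = d a b -> d a x <= k -> d b y <= k ->
  k + delta < d a z -> k + 2 * delta < d b z -> gromov d x y z <= 2 * delta.
Proof.
have [_ _ dC d_tri] := d_metric.
move=> z_on_ab ax_le by_le az_gt bz_gt.
have xb_le : gromov d x b z <= delta.
  have := d_tri a x z; have := dC z b.
  move: (d_hyp a x b z); rewrite /gromov lerBlDr ge_min.
  by case/orP; lra.
have := d_tri b y z; have := dC y b; move: xb_le.
move: (d_hyp x y b z); rewrite /gromov lerBlDr ge_min.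
by case/orP; lra.
Qed.

(* (x, y)_z + (z, y)_x = d x z, so hyperbolicity at x for z1, y, z2 bounds d z1 z2. *)
Lemma dist_le_of_gromov_le (x y z1 z2 : X) :
  gromov d x y z1 <= 2 * delta -> gromov d x y z2 <= 2 * delta ->
  `|d x z1 - d x z2| <= delta -> d z1 z2 <= 7 * delta.
Proof.
have [_ _ dC _] := d_metric.
rewrite /gromov ler_norml => xy_z1 xy_z2 /andP[z12_lo z12_hi].
have := dC x z1; have := dC x z2; have := dC y z1; have := dC y z2; have := dC x y.
move: (d_hyp z1 y z2 x); rewrite /gromov lerBlDr ge_min.
by case/orP; lra.
Qed.

End HyperbolicGeometry.

Lemma truncn_eq_dist_le (R : archiFieldType) (u v c e : R) :
  0 < e -> c <= u -> c <= v ->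
  Num.truncn ((u - c) / e) = Num.truncn ((v - c) / e) -> `|u - v| <= e.
Proof.
move=> e_gt0 cu cv same_slot.
have u_ge0 : 0 <= (u - c) / e by apply: divr_ge0; lra.
have v_ge0 : 0 <= (v - c) / e by apply: divr_ge0; lra.
have := truncn_itv u_ge0; have := truncn_itv v_ge0; rewrite same_slot -natr1.
rewrite !ler_pdivlMr ?ltr_pdivrMr // ?mulrDl ?mul1r.
by move=> /andP[? ?] /andP[? ?]; rewrite ler_norml; apply/andP; split; lra.
Qed.

Lemma truncnS_mul_le (R : archiFieldType) (a e : R) :
  0 < e -> 0 <= a -> (Num.truncn (a / e)).+1%:R * e <= a + e.
Proof.
move=> e_gt0 a_ge0.
have trunc_le : (Num.truncn (a / e))%:R <= a / e
  by rewrite truncn_le divr_ge0 // ltW.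
have := ler_wpM2r (ltW e_gt0) trunc_le.
by rewrite /= divfK ?gt_eqF // -natr1 mulrDl mul1r; lra.
Qed.

Lemma geodesic_two_points (R : realType) (X : Type) (d : X -> X -> R) (x y : X) (s t : R) :
  geodesic_space d -> 0 <= s <= t -> t <= d x y ->
  exists p q, [/\ d x p = s, d p y = d x y - s, d x q = t, d q y = d x y - t
                & d p q = t - s].
Proof.
move=> geo /andP[s_ge0 st] t_le; have [gam [gam0 gamL gam_iso]] := geo x y.
have gam_dist a b : 0 <= a <= b -> b <= d x y -> d (gam a) (gam b) = b - a.
  move=> /andP[a_ge0 ab] b_le.
  by rewrite gam_iso ?ler0_norm ?opprB; try apply/andP; try split; lra.
have from_x r : 0 <= r <= d x y -> d x (gam r) = r.
  by move=> /andP[r_ge0 r_le]; rewrite -[w in d w _]gam0 gam_dist ?subr0 //; lra.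
have to_y r : 0 <= r <= d x y -> d (gam r) y = d x y - r.
  by move=> /andP[r_ge0 r_le]; rewrite -[w in d _ w]gamL gam_dist //; lra.
exists (gam s), (gam t).
by rewrite !from_x ?to_y ?gam_dist //; try apply/andP; try split; lra.
Qed.

Section IsometricAction.
Variables (R : realType) (G : groupType) (X : Type) (d : X -> X -> R).
Variable act : G -> X -> X.
Hypotheses (d_metric : is_metric d) (act_iso : isometric_action d act).

Lemma act_dist_invg (g : G) (z w : X) : d (act g^-1%g z) w = d z (act g w).
Proof. by have [act1 actM act_dist] := act_iso; rewrite -(act_dist g) -actM mulgV act1. Qed.

Lemma disp_invg (g : G) (z : X) : d (act g^-1%g z) z = d (act g z) z.
Proof. by have [_ _ dC _] := d_metric; rewrite act_dist_invg dC. Qed.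

Lemma disp_mulVg_le (a b : G) (z : X) :
  d (act (a^-1 * b)%g z) z <= d (act a z) z + d (act b z) z.
Proof.
have [_ actM _] := act_iso; have [_ _ dC d_tri] := d_metric.
rewrite actM act_dist_invg addrC [d (act a z) z]dC; exact: d_tri.
Qed.

Lemma disp_double_coset_fiber (kappa : R) (u0 u v g : G) (x0 : X) :
  d (act u0 x0) x0 <= kappa -> d (act u x0) x0 <= kappa ->
  d (act (v^-1 * u0^-1 * g)%g x0) x0 <= kappa ->
  d (act (v^-1 * u^-1 * g)%g x0) x0 <= kappa ->
  d (act (u0^-1 * u)%g x0) x0 <= 2 * kappa /\
  d (act (u0^-1 * u)%g (act v x0)) (act v x0) <= 2 * kappa.
Proof.
have [_ actM act_dist] := act_iso.
move=> u0_le u_le w0_le w_le; split.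
  by apply: le_trans (disp_mulVg_le _ _ _) _; lra.
set w0 := (v^-1 * u0^-1 * g)%g in w0_le; set w := (v^-1 * u^-1 * g)%g in w_le.
(* u0^-1 u = v (w0 w^-1) v^-1, so u0^-1 u moves v x0 as much as w0 w^-1 moves x0. *)
have -> : (u0^-1 * u = v * ((w0^-1)^-1 * w^-1) * v^-1)%g.
  by rewrite /w0 /w invgK !invgM !invgK !mulgA mulgV mul1g !mulgK.
rewrite -actM mulgVK actM act_dist.
by apply: le_trans (disp_mulVg_le _ _ _) _; rewrite !disp_invg; lra.
Qed.

End IsometricAction.

Section AcylindricalAction.
Variables (R : realType) (G : groupType) (X : Type) (d : X -> X -> R).
Variables (act : G -> X -> X) (delta kappa0 : R) (N0 : nat).
Hypotheses (d_metric : is_metric d) (d_geo : geodesic_space d).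
Hypotheses (delta_gt0 : 0 < delta) (d_hyp : hyperbolic d delta).
Hypotheses (act_iso : isometric_action d act).
Hypothesis acyl : acylindrical d act delta kappa0 N0.

Lemma card_le_of_act_close (p q : X) (B : {fset G}) :
  kappa0 <= d p q ->
  (forall h1 h2, h1 \in B -> h2 \in B ->
     d (act h1 p) (act h2 p) <= 100 * delta /\ d (act h1 q) (act h2 q) <= 100 * delta) ->
  (#|` B| <= N0)%N.
Proof.
have [_ actM _] := act_iso.
move=> pq_ge B_close; have [->|/fset0Pn [h1 Bh1]] := eqVneq B fset0.
  by rewrite cardfs0.
have <- : #|` [fset (h1^-1 * h)%g | h in B]| = #|` B|.
  by rewrite card_in_imfset //= => ? ? _ _; apply: mulgI.
apply: (acyl pq_ge) => _ /imfsetP[h Bh ->].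
by rewrite !actM !(act_dist_invg act_iso); apply: B_close.
Qed.

Section CoarseStabilizer.
Variables (x y : X) (S : {fset G}).
Hypothesis S_disp :
  forall h, h \in S -> d (act h x) x <= 2 * kappa0 /\ d (act h y) y <= 2 * kappa0.

Lemma gromov_act_segment_le (z : X) (r : R) (h : G) :
  d x z = r -> d z y = d x y - r ->
  2 * kappa0 + delta < r -> 2 * kappa0 + 2 * delta < d x y - r ->
  h \in S -> gromov d x y (act h z) <= 2 * delta.
Proof.
have [_ _ dC _] := d_metric; have [_ _ act_dist] := act_iso.
move=> xz zy r_gt r_lt /S_disp[hx hy].
apply: (gromov_le_near_segment d_metric d_hyp _ hx hy).
- by rewrite !act_dist xz zy addrC subrK.
- by rewrite act_dist xz.
- by rewrite act_dist dC zy.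
Qed.

Lemma dist_act_segment (z : X) (r : R) (h : G) :
  d x z = r -> h \in S -> r - 2 * kappa0 <= d x (act h z) <= r + 2 * kappa0.
Proof.
have [_ _ dC d_tri] := d_metric; have [_ _ act_dist] := act_iso.
move=> xz /S_disp[hx _].
have := d_tri x (act h x) (act h z); have := d_tri (act h x) x (act h z).
have := dC x (act h x); rewrite act_dist xz => ? ? ?; apply/andP; split; lra.
Qed.

Definition segment_slot (z : X) (r : R) (h : G) : nat :=
  Num.truncn ((d x (act h z) - (r - 2 * kappa0)) / delta).

Lemma segment_slot_lt (z : X) (r : R) (h : G) :
  d x z = r -> h \in S ->
  (segment_slot z r h < (Num.truncn (4 * kappa0 / delta)).+1)%N.
Proof.
move=> xz /(dist_act_segment xz)/andP[lo hi]; rewrite ltnS; apply: le_truncn.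
have span_le : d x (act h z) - (r - 2 * kappa0) <= 4 * kappa0 by lra.
by apply: ler_wpM2r span_le; rewrite invr_ge0 ltW.
Qed.

Lemma segment_slot_eq_dist_le (z : X) (r : R) (h1 h2 : G) :
  d x z = r -> d z y = d x y - r ->
  2 * kappa0 + delta < r -> 2 * kappa0 + 2 * delta < d x y - r ->
  h1 \in S -> h2 \in S -> segment_slot z r h1 = segment_slot z r h2 ->
  d (act h1 z) (act h2 z) <= 7 * delta.
Proof.
move=> xz zy r_gt r_lt S1 S2 same_slot.
apply: (dist_le_of_gromov_le d_metric d_hyp
          (gromov_act_segment_le xz zy r_gt r_lt S1)
          (gromov_act_segment_le xz zy r_gt r_lt S2)).
have /andP[lo1 _] := dist_act_segment xz S1; have /andP[lo2 _] := dist_act_segment xz S2.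
exact: truncn_eq_dist_le delta_gt0 lo1 lo2 same_slot.
Qed.

Lemma card_coarse_stabilizer_le :
  delta <= kappa0 -> 10 * kappa0 <= d x y ->
  (#|` S| <= (Num.truncn (4 * kappa0 / delta)).+1 *
             ((Num.truncn (4 * kappa0 / delta)).+1 * N0))%N.
Proof.
move=> delta_le xy_far; have kappa0_gt0 := lt_le_trans delta_gt0 delta_le.
have [|//|p [q [xp py xq qy pq]]] :=
  geodesic_two_points (x := x) (y := y) (s := 4 * kappa0) (t := 5 * kappa0) d_geo.
  by apply/andP; split; lra.
  lra.
have p_lo : 2 * kappa0 + delta < 4 * kappa0 by lra.
have p_hi : 2 * kappa0 + 2 * delta < d x y - 4 * kappa0 by lra.
have q_lo : 2 * kappa0 + delta < 5 * kappa0 by lra.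
have q_hi : 2 * kappa0 + 2 * delta < d x y - 5 * kappa0 by lra.
apply: (card_fset_le_fibers (f := segment_slot p (4 * kappa0))) => [h|i].
  exact: segment_slot_lt.
apply: (card_fset_le_fibers (f := segment_slot q (5 * kappa0))) => [h|j].
  by rewrite inE => /andP[Sh _]; apply: segment_slot_lt.
apply: (card_le_of_act_close (p := p) (q := q)); first lra.
move=> h1 h2; rewrite !inE => /andP[/andP[S1 /eqP i1] /eqP j1].
move=> /andP[/andP[S2 /eqP i2] /eqP j2].
have := segment_slot_eq_dist_le xp py p_lo p_hi S1 S2 (etrans i1 (esym i2)).
have := segment_slot_eq_dist_le xq qy q_lo q_hi S1 S2 (etrans j1 (esym j2)).
by have := delta_gt0; split; lra.
Qed.

End CoarseStabilizer.

Lemma card_double_coset_fiber_le (U1 : {fset G}) (v g : G) (x0 : X) :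
  delta <= kappa0 -> 10 * kappa0 <= d x0 (act v x0) ->
  (forall u, u \in U1 -> d (act u x0) x0 <= kappa0) ->
  (#|` [fset u in U1 | (v^-1 * u^-1 * g)%g \in U1]| <=
     (Num.truncn (4 * kappa0 / delta)).+1 *
     ((Num.truncn (4 * kappa0 / delta)).+1 * N0))%N.
Proof.
move=> delta_le v_far U1_disp; set T := [fset u in U1 | _].
have [->|/fset0Pn [u0 Tu0]] := eqVneq T fset0; first by rewrite cardfs0.
have <- : #|` [fset (u0^-1 * u)%g | u in T]| = #|` T|.
  by rewrite card_in_imfset //= => ? ? _ _; apply: mulgI.
apply: (card_coarse_stabilizer_le (x := x0) (y := act v x0)) => //.
move=> _ /imfsetP[u Tu ->].
move: Tu0 Tu; rewrite !inE => /andP[U1u0 U1w0] /andP[U1u U1w].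
by apply: (disp_double_coset_fiber d_metric act_iso (g := g)); apply: U1_disp.
Qed.

End AcylindricalAction.

Lemma acylindricity_constant_le (R : realFieldType) (delta kappa0 : R) (M N0 : nat) :
  0 < delta -> delta <= kappa0 -> (1 <= N0)%N -> M%:R * delta <= 5 * kappa0 ->
  (1 / 10 ^+ 6 * (delta / N0%:R / kappa0)) ^+ 2 * (M * (M * N0))%:R <= 1.
Proof.
move=> delta_gt0 delta_le N0_ge1 M_le.
have kappa0_gt0 : 0 < kappa0 by lra.
have n_ge1 : 1 <= N0%:R :> R by rewrite ler1n.
set c := 1 / 10 ^+ 6 * _; rewrite !natrM; set m := M%:R; set n := N0%:R.
have cmn_eq : c * m * n = m * delta / kappa0 / 10 ^+ 6.
  by rewrite /c; field; rewrite pnatr_eq0 -lt0n N0_ge1 gt_eqF.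
have cmn_ge0 : 0 <= c * m * n.
  by rewrite cmn_eq !divr_ge0 ?exprn_ge0 ?mulr_ge0 //; lra.
have cmn_le1 : c * m * n <= 1.
  rewrite cmn_eq ler_pdivrMr ?exprn_gt0 // mul1r ler_pdivrMr //.
  apply: le_trans M_le _; rewrite ler_pM2r // (@le_trans _ _ 10) ?ler_nat //.
  by rewrite ler_eXnr // ler1n.
have -> : c ^+ 2 * (m * (m * n)) = (c * m) ^+ 2 * n by ring.
apply: le_trans (_ : (c * m * n) ^+ 2 <= 1); last by rewrite expr_le1.
rewrite [X in _ <= X]exprMn; apply: ler_wpM2l; first exact: sqr_ge0.
by rewrite expr2 ler_peMl //; lra.
Qed.

Theorem lemma5p1 (R : realType) (G : groupType) (X : Type) (d : X -> X -> R)
  (act : G -> X -> X) (delta kappa0 : R) (N0 : nat) :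
  is_metric d -> geodesic_space d -> 0 < delta -> hyperbolic d delta ->
  isometric_action d act -> (1 <= N0)%N -> acylindrical d act delta kappa0 N0 ->
  delta <= kappa0 ->
  let rho0 := delta / N0%:R in
  let c := 1 / 10 ^+ 6 * (rho0 / kappa0) in
  forall (U : {fset G}) (x0 : X),
    avg_disp d act U x0 <= energy d act U + delta ->
    let U1 := [fset u in U | d (act u x0) x0 <= kappa0] in
    forall v : G, 10 ^+ 4 * kappa0 <= d (act v x0) x0 ->
      c ^+ 2 * (#|` U1|%:R) ^+ 2 <= (#|` double_coset_prod U1 v|%:R : R).
Proof.
move=> d_metric d_geo delta_gt0 d_hyp act_iso N0_ge1 acyl delta_le rho0 c U x0 _ U1 v v_far.
have [_ _ dC _] := d_metric; have kappa0_gt0 := lt_le_trans delta_gt0 delta_le.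
set M := (Num.truncn (4 * kappa0 / delta)).+1.
have fiber_le g :
    (#|` [fset u in U1 | (v^-1 * u^-1 * g)%g \in U1]| <= M * (M * N0))%N.
  apply: (card_double_coset_fiber_le d_metric d_geo delta_gt0 d_hyp act_iso acyl) => //.
    rewrite dC; apply: le_trans v_far; rewrite ler_pM2r //.
    by rewrite ler_eXnr // ler1n.
  by move=> u; rewrite inE => /andP[].
have M_le : M%:R * delta <= 5 * kappa0.
  by have := truncnS_mul_le delta_gt0 (_ : 0 <= 4 * kappa0); rewrite -/M; lra.
have c_bound : c ^+ 2 * (M * (M * N0))%:R <= 1 by apply: acylindricity_constant_le.
have card_le :
    #|` U1|%:R ^+ 2 <= (#|` double_coset_prod U1 v| * (M * (M * N0)))%:R :> R.
  by rewrite expr2 -natrM ler_nat; apply: card_double_coset_prod_ge.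
apply: le_trans (ler_wpM2l (sqr_ge0 c) card_le) _.
by rewrite natrM mulrCA ler_piMr.
Qed.
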